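(* Let $A\in\mathbb R^{n\times n}$ be tridiagonal, $n\ge 2$, and let $Q\in\mathbb R^{2n\times 2n}$ be the orthogonal matrix produced by Algorithm 1 (described in the context) applied to $A$. Then for every $1\le k<n$, the matrices $Q(1{:}k,\,k{+}1{:}n)$ and $Q(n{+}1{:}n{+}k,\,k{+}1{:}n)$ have rank at most $2$.
   Context: A Givens rotation on rows $p\ne q$ is an orthogonal matrix $G\in\mathbb R^{2n\times 2n}$ equal to the identity except in the entries $(p,p),(p,q),(q,p),(q,q)$, which form a $2\times2$ rotation $\begin{bmatrix}c&s\\-s&c\end{bmatrix}$, $c^2+s^2=1$. ''Rotate rows $p,q$ to annihilate $R(q,j)$'' means: choose such a $G$ for which $(G^{T}R)(q,j)=0$ and then update $R\leftarrow G^{T}R$, $Q\leftarrow QG$. Algorithm 1: Initialize $Q=I_{2n}$ and $R=\begin{bmatrix}A\\ I_n\end{bmatrix}\in\mathbb R^{2n\times n}$. First rotate rows $1,n+1$ to annihilate $R(n+1,1)$; then rotate rows $1,2$ to annihilate $R(2,1)$. Then for $i=2,\dots,n$: (a) rotate rows $n+1,n+i$ to annihilate $R(n+i,i)$; (b) rotate rows $i,n+1$ to annihilate $R(n+1,i)$; (c) if $i<n$, rotate rows $i,i+1$ to annihilate $R(i+1,i)$. On output $QR=\begin{bmatrix}A\\ I\end{bmatrix}$ with $R$ upper triangular. Notation $Q(a{:}b,c{:}d)$ denotes the submatrix with rows $a,\dots,b$ and columns $c,\dots,d$. *)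

From HB Require Import structures.
From mathcomp Require Import all_boot all_order all_algebra.
Set Implicit Arguments. Unset Strict Implicit. Unset Printing Implicit Defensive.
Import Order.TTheory GRing.Theory Num.Theory.
Local Open Scope ring_scope.

(* All indices below are 0-based natural numbers (paper's index t is t-1 here). *)

(* Entry of a matrix at natural-number indices (0 when out of range). *)
Definition mxn (R : nmodType) (a b : nat) (M : 'M[R]_(a, b)) (i j : nat) : R :=
  match @insub nat (fun x => x < a)%N 'I_a i, @insub nat (fun x => x < b)%N 'I_b j with
  | Some i', Some j' => M i' j'
  | _, _ => 0
  end.

Definition givens (R : ringType) (m p q : nat) (c s : R) : 'M[R]_m :=
  \matrix_(i < m, j < m)
    if (i == p :> nat) && (j == p :> nat) then c
    else if (i == p :> nat) && (j == q :> nat) then s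
    else if (i == q :> nat) && (j == p :> nat) then - s
    else if (i == q :> nat) && (j == q :> nat) then c
    else ((i == j)%:R : R).

Definition givens_step (R : ringType) (m n : nat) (p q j : nat)
    (st st' : 'M[R]_m * 'M[R]_(m, n)) : Prop :=
  exists c s : R,
    [/\ c ^+ 2 + s ^+ 2 = 1,
        mxn ((givens m p q c s)^T *m st.2) q j = 0,
        st'.2 = (givens m p q c s)^T *m st.2 &
        st'.1 = st.1 *m givens m p q c s].

(* The schedule of rotations (p, q, j) of Algorithm 1, 0-based:
   (0,n,0), (0,1,0), then for i' = 1..n-1 (paper's i = i'+1):
   (n, n+i', i'), (i', n, i'), and (i', i'+1, i') if i' < n-1. *)
Definition alg1_schedule (n : nat) : seq (nat * nat * nat) :=
  [:: (0, n, 0); (0, 1, 0)]%N ++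
  flatten [seq [:: (n, n + i, i); (i, n, i)]%N ++
               (if (i < n.-1)%N then [:: (i, i.+1, i)] else [::])
          | i <- iota 1 n.-1].

Fixpoint alg1_run (R : ringType) (m n : nat) (sch : seq (nat * nat * nat))
    (st st' : 'M[R]_m * 'M[R]_(m, n)) : Prop :=
  match sch with
  | [::] => st' = st
  | (p, q, j) :: sch' =>
      exists st1, givens_step p q j st st1 /\ alg1_run sch' st1 st'
  end.

Definition tridiagonal (R : nmodType) (n : nat) (A : 'M[R]_n) : Prop :=
  forall i j : 'I_n, (i.+1 < j)%N || (j.+1 < i)%N -> A i j = 0.

From HB Require Import structures.
From mathcomp Require Import all_boot all_order all_algebra.
From mathcomp Require Import zify.
Import GRing.Theory.
Set Implicit Arguments. Unset Strict Implicit.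
Local Open Scope ring_scope.

(* Only the pattern of the rotations matters.  Split Algorithm 1 after the k-th round: the rotations performed so
   far only touch rows in S = {0..k} u {n..n+k-1}, the later ones only rows in
   T = {k..n} u {n+k..2n-1}.  Hence Q = P M where P is the identity outside
   S x S and M the identity outside T x T.  For a row i in S and a column c in
   T, the only indices l contributing to (P M)(i,c) lie in S n T = {k, n}, so
   both blocks of the theorem are sums of two rank-one matrices. *)

Definition identity_off (R : nzRingType) m (S : pred nat) (M : 'M[R]_m) :=
  forall i j : 'I_m, ~~ (S i && S j) -> M i j = (i == j)%:R.

Section IdentityOff.
Variable R : nzRingType.

Lemma identity_off1 m S : identity_off S (1%:M : 'M[R]_m).
Proof. by move=> i j _; rewrite mxE. Qed.

Lemma identity_offM m S (A B : 'M[R]_m) :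
  identity_off S A -> identity_off S B -> identity_off S (A *m B).
Proof.
move=> hA hB i j hij; rewrite mxE.
case Si: (S i).
  have Sj: S j = false by move: hij; rewrite Si /=; case: (S j).
  transitivity ((A *m 1%:M) i j); last by rewrite mulmx1 hA // Sj andbF.
  by rewrite mxE; apply: eq_bigr => l _; rewrite hB ?Sj ?andbF // mxE.
transitivity ((1%:M *m B) i j); last by rewrite mul1mx hB ?Si.
by rewrite mxE; apply: eq_bigr => l _; rewrite hA ?Si // mxE.
Qed.

Lemma identity_off_givens m (S : pred nat) p q c s :
  S p -> S q -> identity_off S (givens m p q c s : 'M[R]_m).
Proof.
move=> Sp Sq i j; rewrite mxE.
have neq x y : S x -> ~~ S y -> (y == x) = false.
  by move=> Sx Sy; apply/eqP => exy; rewrite exy Sx in Sy.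
by case/nandP => Sij; rewrite !(neq _ _ Sp Sij) !(neq _ _ Sq Sij) ?andbF.
Qed.

Lemma mulmx_identity_off_entry m (S T : pred nat) (P M : 'M[R]_m) (a b i c : 'I_m) :
  identity_off S P -> identity_off T M -> a != b ->
  (forall l : 'I_m, S l -> T l -> (l == a) || (l == b)) -> S i -> T c ->
  (P *m M) i c = P i a * M a c + P i b * M b c.
Proof.
move=> hP hM ab hST Si Tc; rewrite mxE (bigD1 a) //= (bigD1 b) 1?eq_sym //=.
rewrite big1 ?addr0 // => l /andP[la lb].
case Tl: (T l).
  case Sl: (S l); first by move: (hST l Sl Tl); rewrite (negbTE la) (negbTE lb).
  rewrite hP ?Sl ?andbF //.
  have -> : (i == l) = false by apply/eqP => eil; rewrite -eil Si in Sl.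
  by rewrite mul0r.
rewrite hM ?Tl //.
have -> : (l == c) = false by apply/eqP => elc; rewrite elc Tc in Tl.
by rewrite mulr0.
Qed.

Lemma alg1_run_cat m n (s1 s2 : seq (nat * nat * nat)) (st st' : 'M[R]_m * 'M[R]_(m, n)) :
  alg1_run (s1 ++ s2) st st' -> exists2 st1, alg1_run s1 st st1 & alg1_run s2 st1 st'.
Proof.
elim: s1 st => [|[[p q] j] s1 IH] st /=; first by exists st.
case=> st1 [h1 /IH[st2 h2 h3]].
by exists st2 => //; exists st1.
Qed.

Lemma alg1_run_identity_off m n (S : pred nat) (sch : seq (nat * nat * nat))
    (st st' : 'M[R]_m * 'M[R]_(m, n)) :
  alg1_run sch st st' -> all (fun r => S r.1.1 && S r.1.2) sch ->
  exists2 M, identity_off S M & st'.1 = st.1 *m M.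
Proof.
elim: sch st => [|[[p q] j] s IH] st /=.
  by move=> ->; exists 1%:M; [apply: identity_off1 | rewrite mulmx1].
case=> st1 [[c [s' [_ _ _ e1]]] h2] /andP[/andP[Sp Sq] hs].
have [M hM e] := IH _ h2 hs.
exists (givens m p q c s' *m M); first exact/identity_offM/hM/identity_off_givens.
by rewrite e e1 mulmxA.
Qed.

End IdentityOff.

Lemma mxrank_rank1_sum_le2 (F : fieldType) m n (A : 'M[F]_(m, n))
    (u1 u2 : 'I_m -> F) (v1 v2 : 'I_n -> F) :
  (forall i j, A i j = u1 i * v1 j + u2 i * v2 j) -> (\rank A <= 2)%N.
Proof.
move=> hA.
have -> : A = row_mx (\col_i u1 i) (\col_i u2 i) *m col_mx (\row_j v1 j) (\row_j v2 j).
  apply/matrixP => i j; rewrite mul_row_col !mxE hA.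
  by rewrite !big_ord1 !mxE.
exact: leq_trans (mxrankM_maxl _ _) (rank_leq_col _).
Qed.

Lemma mxn_ord (R : nmodType) a b (M : 'M[R]_(a, b)) i j (hi : (i < a)%N) (hj : (j < b)%N) :
  mxn M i j = M (Ordinal hi) (Ordinal hj).
Proof.
rewrite /mxn; case: insubP => [i' _ ei|]; last by rewrite hi.
case: insubP => [j' _ ej|]; last by rewrite hj.
by congr (M _ _); apply: val_inj.
Qed.

Definition alg1_round (n i : nat) : seq (nat * nat * nat) :=
  [:: (n, n + i, i); (i, n, i)]%N ++
  (if (i < n.-1)%N then [:: (i, i.+1, i)] else [::]).

Lemma alg1_schedule_split n k : (1 <= k <= n)%N ->
  alg1_schedule n =
    ([:: (0, n, 0); (0, 1, 0)]%N ++ flatten [seq alg1_round n i | i <- iota 1 k.-1]) ++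
    flatten [seq alg1_round n i | i <- iota k (n - k)].
Proof.
move=> hk; rewrite /alg1_schedule; have -> : iota 1 n.-1 = iota 1 k.-1 ++ iota k (n - k).
  have -> : n.-1 = (k.-1 + (n - k))%N by lia.
  by rewrite iotaD; congr (_ ++ iota _ _); lia.
by rewrite map_cat flatten_cat catA.
Qed.

Lemma alg1_rounds_within (S : pred nat) n (s : seq nat) :
  (forall i, i \in s -> [&& S n, S i, S (n + i) & (i < n.-1)%N ==> S i.+1]) ->
  all (fun r => S r.1.1 && S r.1.2) (flatten [seq alg1_round n i | i <- s]).
Proof.
move=> hs; apply/allP => r /flatten_mapP[i /hs /and4P[Sn Si Sni Si1]].
rewrite /alg1_round mem_cat => /orP[|].
  by rewrite !inE => /orP[]/eqP-> /=; rewrite ?Sn ?Si ?Sni.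
by case: ifP Si1 => //= _ Si1; rewrite inE => /eqP-> /=; rewrite Si Si1.
Qed.

Theorem theorem4p1 (R : rcfType) (n : nat) (A : 'M[R]_n)
    (Q : 'M[R]_(n + n)) (Rfin : 'M[R]_(n + n, n)) :
  (2 <= n)%N ->
  tridiagonal A ->
  alg1_run (alg1_schedule n) (1%:M, col_mx A 1%:M) (Q, Rfin) ->
  forall k : nat, (1 <= k < n)%N ->
    (\rank (\matrix_(i < k, j < n - k) mxn Q i (k + j)) <= 2)%N /\
    (\rank (\matrix_(i < k, j < n - k) mxn Q (n + i) (k + j)) <= 2)%N.
Proof.
move=> _ _ run k /andP[k_ge1 k_lt_n].
rewrite (@alg1_schedule_split n k) in run; last by lia.
have [st run_first run_last] := alg1_run_cat run.
pose S x := (x <= k)%N || (n <= x < n + k)%N.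
pose T x := (k <= x <= n)%N || (n + k <= x)%N.
have [P hP eP] : exists2 P, identity_off S P & st.1 = 1%:M *m P.
  apply: (alg1_run_identity_off run_first).
  rewrite all_cat alg1_rounds_within ?andbT /= /S; first by lia.
  by move=> i; rewrite mem_iota => hi; apply/and4P; split; lia.
have [M hM eM] : exists2 M, identity_off T M & Q = st.1 *m M.
  apply: (alg1_run_identity_off run_last); apply: alg1_rounds_within => i.
  by rewrite mem_iota /T => hi; apply/and4P; split; lia.
have Q_entry r c : S r -> T c -> (r < n + n)%N -> (c < n + n)%N ->
    mxn Q r c = mxn P r k * mxn M k c + mxn P r n * mxn M n c.
  move=> Sr Tc hr hc; have hk : (k < n + n)%N by lia.
  have hn : (n < n + n)%N by lia.
  rewrite !(mxn_ord _ hr hk, mxn_ord _ hr hn, mxn_ord _ hk hc, mxn_ord _ hn hc).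
  rewrite (mxn_ord _ hr hc) eM eP mul1mx.
  apply: (mulmx_identity_off_entry hP hM) => //; first by rewrite -val_eqE /=; lia.
  by move=> l; rewrite /S /T -!val_eqE /=; lia.
split; apply: mxrank_rank1_sum_le2 => i j; rewrite mxE Q_entry // /S /T;
  by have := ltn_ord i; have := ltn_ord j; lia.
Qed.
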